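(* Let $A \in SL(2,\mathbb{Z})$. Then for every $k \geq 1$ there is an integer $1 \leq d \leq 6^k$ such that \[ I + A + A^2 + \cdots + A^{d-1} \equiv 0 \mod 3^k, \] where $I$ is the identity matrix and the congruence is entrywise. *)

From mathcomp Require Import all_boot all_order all_algebra.
Set Implicit Arguments. Unset Strict Implicit. Unset Printing Implicit Defensive.
Import GRing.Theory Num.Theory.
Local Open Scope ring_scope.

Definition SL2Z (A : 'M[int]_2) : Prop := \det A = 1.

Definition mx_cong0 (m : int) (B : 'M[int]_2) : Prop :=
  forall i j : 'I_2, (m %| B i j)%Z.

From mathcomp Require Import all_boot all_order all_algebra.
From mathcomp Require Import ring zify.

(* Write S_d = I + A + ... + A^(d-1).  As A^d = I + (A - I) S_d, the identity
   S_3d = S_d (I + A^d + A^2d) = 3 S_d + 3 (A - I) S_d^2 + (A - I)^2 S_d^3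
   shows that S_d = 0 mod m with 3 | m gives S_3d = 0 mod 3m.  Starting from
   some d in {3, 4, 6} with S_d = 0 mod 3, which Cayley-Hamilton
   A^2 = t A - I provides according to the trace t mod 3, this yields
   d <= 2 * 3^k <= 6^k for the modulus 3^k. *)

Set Implicit Arguments.
Unset Strict Implicit.
Unset Printing Implicit Defensive.
Import GRing.Theory Num.Theory.
Local Open Scope ring_scope.

Lemma mx_cong0_add m (X Y : 'M[int]_2) :
  mx_cong0 m X -> mx_cong0 m Y -> mx_cong0 m (X + Y).
Proof. by move=> hX hY i j; rewrite mxE rpredD. Qed.

Lemma mx_cong0_mull m (X Y : 'M[int]_2) : mx_cong0 m Y -> mx_cong0 m (X * Y).
Proof.
by move=> hY i j; rewrite !mxE rpred_sum // => l _; rewrite dvdz_mull.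
Qed.

Lemma mx_cong0_mulr m (X Y : 'M[int]_2) : mx_cong0 m X -> mx_cong0 m (X * Y).
Proof.
by move=> hX i j; rewrite !mxE rpred_sum // => l _; rewrite dvdz_mulr.
Qed.

Lemma mx_cong0_mul m n (X Y : 'M[int]_2) :
  mx_cong0 m X -> mx_cong0 n Y -> mx_cong0 (m * n) (X * Y).
Proof.
by move=> hX hY i j; rewrite !mxE rpred_sum // => l _; rewrite dvdz_mul.
Qed.

Lemma mx_cong0_dvd m n (X : 'M[int]_2) :
  (m %| n)%Z -> mx_cong0 n X -> mx_cong0 m X.
Proof. by move=> hmn hX i j; apply: dvdz_trans (hX i j). Qed.

Lemma mx_cong0_scalar m c : (m %| c)%Z -> mx_cong0 m (c%:M : 'M[int]_2).
Proof.
by move=> hc i j; rewrite mxE; case: (i == j); rewrite ?mulr1n ?mulr0n ?dvdz0.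
Qed.

Lemma geom_sum_add (R : pzSemiRingType) (a : R) m n :
  \sum_(i < m + n) a ^+ i = \sum_(i < m) a ^+ i + a ^+ m * \sum_(i < n) a ^+ i.
Proof.
rewrite big_split_ord mulr_sumr; congr (_ + _).
by apply: eq_bigr => i _; rewrite exprD.
Qed.

Lemma geom_sum_tripled (R : comPzRingType) (a : R) (d : nat)
    (s := \sum_(i < d) a ^+ i) :
  \sum_(i < 3 * d) a ^+ i =
    3 * s + 3 * (a - 1) * s ^+ 2 + (a - 1) ^+ 2 * s ^+ 3.
Proof.
have ad : a ^+ d = 1 + (a - 1) * s by rewrite -subrX1 addrC subrK.
rewrite mulSn mul2n -addnn !geom_sum_add -/s ad; ring.
Qed.

(* Geometric sums modulo c = a^2 - t a + 1, the characteristic polynomial of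
   an SL2 matrix of trace t: the remainders are multiples of t, t - 1 and
   t + 1 respectively, one of which is divisible by 3. *)
Section GeomSumModQuadratic.
Variables (R : comPzRingType) (a t : R).
Let c := a ^+ 2 - t * a + 1.

Lemma geom_sum3_mod : \sum_(i < 3) a ^+ i = (t + 1) * a + c.
Proof. rewrite /c !big_ord_recr big_ord0 /=; ring. Qed.

Lemma geom_sum4_mod : \sum_(i < 4) a ^+ i = t * ((1 + a) * a) + c * (1 + a).
Proof. rewrite /c !big_ord_recr big_ord0 /=; ring. Qed.

Lemma geom_sum6_mod : \sum_(i < 6) a ^+ i =
  (t - 1) * ((t + 1) * a * ((t + 1) * a - 1)) +
  c * ((t + 1) * a * (t + a) + (t ^+ 2 - 1) * a + (1 - t) + (t + a) * c).
Proof. rewrite /c !big_ord_recr big_ord0 /=; ring. Qed.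
End GeomSumModQuadratic.

Lemma char_poly2 (R : comNzRingType) (A : 'M[R]_2) :
  char_poly A = 'X^2 - (\tr A)%:P * 'X + (\det A)%:P.
Proof.
apply/polyP => i; rewrite coefD coefB coefXn coefCM coefX coefC.
case: i => [|[|[|i]]] /=.
- by rewrite char_poly_det expr2 mulrNN !mul1r mulr0 !subr0 add0r.
- by rewrite char_poly_trace // mulr1 sub0r addr0.
- have := char_poly_monic A; rewrite qualifE /= lead_coefE size_char_poly.
  by move/eqP=> ->; rewrite mulr0 subr0 addr0.
- by rewrite nth_default ?size_char_poly // mulr0 subrr addr0.
Qed.

Lemma SL2Z_Cayley_Hamilton (A : 'M[int]_2) :
  SL2Z A -> horner_mx A ('X^2 - (\tr A)%:P * 'X + 1) = 0.
Proof. by move=> hA; rewrite -polyC1 -hA -char_poly2 Cayley_Hamilton. Qed.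

Lemma horner_mx_geom_sum (R : comNzRingType) n (A : 'M[R]_n.+1) d :
  horner_mx A (\sum_(i < d) 'X^i) = \sum_(i < d) A ^+ i.
Proof.
by rewrite rmorph_sum; apply: eq_bigr => i _; rewrite rmorphXn /= horner_mx_X.
Qed.

Lemma mx_cong0_horner m e (A : 'M[int]_2) (c p q r : {poly int}) :
  horner_mx A c = 0 -> (m %| e)%Z -> p = e%:P * q + c * r ->
  mx_cong0 m (horner_mx A p).
Proof.
move=> hc he ->; rewrite rmorphD !rmorphM /= hc mul0r addr0 horner_mx_C.
by apply: mx_cong0_mulr; apply: mx_cong0_scalar.
Qed.

Lemma SL2Z_geom_sum_cong0_mod3 (A : 'M[int]_2) : SL2Z A ->
  exists d, [/\ (1 <= d)%N, (d <= 6)%N & mx_cong0 3 (\sum_(i < d) A ^+ i)].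
Proof.
move=> /SL2Z_Cayley_Hamilton hA; set t := \tr A in hA.
have [t0|t1|t2] : [\/ (3 %| t)%Z, (3 %| t - 1)%Z | (3 %| t + 1)%Z].
  by apply/or3P; lia.
- exists 4%N; split=> //; rewrite -horner_mx_geom_sum.
  exact: mx_cong0_horner hA t0 (geom_sum4_mod 'X t%:P).
- exists 6%N; split=> //; rewrite -horner_mx_geom_sum.
  apply: mx_cong0_horner hA t1 _.
  by rewrite (geom_sum6_mod _ t%:P) polyCB polyC1.
- exists 3%N; split=> //; rewrite -horner_mx_geom_sum.
  apply: mx_cong0_horner hA t2 _.
  rewrite (geom_sum3_mod _ t%:P) polyCD polyC1.
  by congr (_ + _); rewrite -[LHS]mulr1.
Qed.

Lemma geom_sum_cong0_tripled m (A : 'M[int]_2) d : (3 %| m)%Z ->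
  mx_cong0 m (\sum_(i < d) A ^+ i) ->
  mx_cong0 (3 * m) (\sum_(i < 3 * d) A ^+ i).
Proof.
move=> m3 hS; rewrite -!horner_mx_geom_sum geom_sum_tripled.
rewrite !rmorphD !rmorphM /= rmorph_nat horner_mx_geom_sum.
set S := \sum_(i < d) A ^+ i in hS *.
have S2 : mx_cong0 (3 * m) (S * S).
  by apply: mx_cong0_dvd (mx_cong0_mul hS hS); rewrite dvdz_mul.
have h3 : mx_cong0 3 (3%:R : 'M[int]_2).
  by rewrite -(rmorph_nat (@scalar_mx int 2)); apply: mx_cong0_scalar.
apply: mx_cong0_add; first apply: mx_cong0_add.
- exact: mx_cong0_mul h3 hS.
- exact: mx_cong0_mull S2.
- by rewrite mulrA; apply: mx_cong0_mull.
Qed.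

Lemma SL2Z_geom_sum_cong0_pow3 (A : 'M[int]_2) k : SL2Z A -> (1 <= k)%N ->
  exists d, [/\ (1 <= d)%N, (d <= 2 * 3 ^ k)%N &
    mx_cong0 (3 ^ k)%:Z (\sum_(i < d) A ^+ i)].
Proof.
move=> hA; elim: k => [//|[|k] IH] _.
  by have [d [d1 d6 hd]] := SL2Z_geom_sum_cong0_mod3 hA; exists d.
have [d [d1 dk hd]] := IH isT.
exists (3 * d)%N; split; first by rewrite muln_gt0.
  by rewrite expnS mulnCA leq_mul2l.
rewrite expnS PoszM; apply: geom_sum_cong0_tripled hd.
by rewrite expnS PoszM dvdz_mulr.
Qed.

Lemma leq_double_pow3_pow6 k : (1 <= k)%N -> (2 * 3 ^ k <= 6 ^ k)%N.
Proof.
move=> hk; rewrite -[6%N]/(2 * 3)%N expnMn leq_mul2r.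
by rewrite (leq_ltn_trans hk (ltn_expl k _)) ?orbT.
Qed.

Theorem lemma5p30 (A : 'M[int]_2) (hA : SL2Z A) (k : nat) (hk : (1 <= k)%N) :
  exists d : nat, [/\ (1 <= d)%N, (d <= 6 ^ k)%N &
    mx_cong0 (3 ^ k)%:Z (\sum_(i < d) A ^+ i)].
Proof.
have [d [d1 dk hd]] := SL2Z_geom_sum_cong0_pow3 hA hk.
by exists d; split=> //; apply: leq_trans dk (leq_double_pow3_pow6 hk).
Qed.
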